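(* Let $t\ge 3$ be an integer, let $G$ be a graph not containing $K_{3,t}$ as a subgraph, and let $\nabla$ be an integer with $\nabla>\nabla_1^B(G)$. Define $D_1=\{v\in V(G):$ for all $A\subseteq V(G)\setminus\{v\}$ with $N(v)\subseteq N[A]$ we have $|A|>2\nabla-1\}$, $R_1=V(G)\setminus N[D_1]$, $N_{R_1}(v)=N(v)\cap R_1$, $B_v=\{z\in V(G)\setminus\{v\}: |N_{R_1}(v)\cap N_{R_1}(z)|\ge(2\nabla-1)t+1\}$ for $v\in V(G)$, $W=\{v\in V(G): B_v\neq\emptyset\}$, $D_2=\bigcup_{v\in W}(\{v\}\cup B_v)$, and $R=V(G)\setminus N[D_1\cup D_2]$. Then for every $v\in V(G)$ we have $|N(v)\cap R|\le(2\nabla-1)^2t+(2\nabla-1)$.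
   Context: Graphs are finite, undirected and simple. $N(v)$ is the open neighbourhood of $v$, $N[v]=N(v)\cup\{v\}$, $N[A]=\bigcup_{a\in A}N[a]$. A $1$-shallow minor of $G$ is a graph obtained from $G$ by deleting vertices and edges and contracting pairwise vertex-disjoint connected subgraphs of radius at most $1$; $\nabla_1^B(G)$ is the maximum edge density $|E(H)|/|V(H)|$ of a bipartite $1$-shallow minor $H$ of $G$. $K_{3,t}$ is the complete bipartite graph with parts of sizes $3$ and $t$. *)

(* A finite simple graph = (T : finType, e : rel T) with e
   symmetric and irreflexive. *)
From mathcomp Require Import all_boot all_order.
Set Implicit Arguments. Unset Strict Implicit. Unset Printing Implicit Defensive.

Section Graph.
Variables (T : finType) (e : rel T).

Definition nbh (v : T) : {set T} := [set u | e v u].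
Definition cnbhs (A : {set T}) : {set T} :=
  [set u | [exists a in A, (u == a) || e a u]].

Definition has_K3t (t : nat) : Prop :=
  exists (X Y : {set T}), [/\ #|X| = 3, #|Y| = t, [disjoint X & Y] &
    forall x y, x \in X -> y \in Y -> e x y].

Definition nedges k (h : rel 'I_k) : nat :=
  #|[set p : 'I_k * 'I_k | (p.1 < p.2)%N && h p.1 p.2]|.

Definition bipartite k (h : rel 'I_k) : Prop :=
  exists f : 'I_k -> bool, forall i j, h i j -> f i != f j.

(* H (simple graph on 'I_k) is a 1-shallow minor of G, witnessed by
   pairwise disjoint branch sets S i, each containing a centre c i with
   S i \subset N[c i] (i.e. connected of radius <= 1), such that every edge
   of H is realised by an edge of G between the branch sets. *)
Definition shallow1_minor k (h : rel 'I_k) : Prop :=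
  exists (S : 'I_k -> {set T}) (c : 'I_k -> T),
    [/\ forall i, c i \in S i,
        forall i, S i \subset cnbhs [set c i],
        forall i j, i != j -> [disjoint S i & S j] &
        forall i j, h i j -> exists x y, [/\ x \in S i, y \in S j & e x y]].

(* nab > \nabla_1^B(G): every nonempty bipartite 1-shallow minor H has
   |E(H)| / |V(H)| < nab (the max over the finitely many H is < nab). *)
Definition nabla1B_lt (nab : nat) : Prop :=
  forall k (h : rel 'I_k), symmetric h -> irreflexive h ->
    (0 < k)%N -> bipartite h -> shallow1_minor h -> (nedges h < nab * k)%N.

Variables (t nab : nat).
Definition bnd : nat := 2 * nab - 1.

Definition D1 : {set T} :=
  [set v | [forall A : {set T}, (v \notin A) && (nbh v \subset cnbhs A) ==>
                                 (bnd < #|A|)%N]].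
Definition R1 : {set T} := ~: cnbhs D1.
Definition NR1 (v : T) : {set T} := nbh v :&: R1.
Definition Bv (v : T) : {set T} :=
  [set z | (z != v) && (bnd * t + 1 <= #|NR1 v :&: NR1 z|)%N].
Definition W : {set T} := [set v | Bv v != set0].
Definition D2 : {set T} := \bigcup_(v in W) (v |: Bv v).
Definition Rset : {set T} := ~: cnbhs (D1 :|: D2).

End Graph.

From mathcomp Require Import all_boot all_order.

(* If v is in D1, no neighbour of v is in R. Otherwise some set A of at most
   2∇-1 vertices dominates N(v), and a neighbour of v in R is either in A or
   adjacent to some a in A. In the latter case a is not in D2 (its neighbours
   would avoid R), so a is not in B_v, and a and v have at most (2∇-1)t common
   neighbours in R1 ⊇ R. *)

Set Implicit Arguments.
Unset Strict Implicit.
Unset Printing Implicit Defensive.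

Lemma card_bigcup_le (T : finType) (A : {set T}) (F : T -> {set T}) :
  #|\bigcup_(a in A) F a| <= \sum_(a in A) #|F a|.
Proof.
elim/big_rec2: _ => [|a n U _ leUn]; first by rewrite cards0.
by rewrite (leq_trans (leq_card_setU _ _)) // leq_add2l.
Qed.

Section ResidualNeighbourhood.
Variables (T : finType) (e : rel T) (t nab : nat).

Local Notation b := (bnd nab).
Local Notation R := (Rset e t nab).

Lemma nbh_D1D2_Rset a :
  a \in D1 e nab :|: D2 e t nab -> nbh e a :&: R = set0.
Proof.
move=> aD; apply/setP => y; rewrite !inE.
by case eay: (e a y); rewrite //= negbK; apply/existsP; exists a; rewrite aD eay orbT.
Qed.

Lemma Rset_sub_R1 : R \subset R1 e nab.
Proof.
apply/subsetP => y; rewrite !inE; apply: contra => /existsP[a /andP[aD ya]].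
by apply/existsP; exists a; rewrite inE aD.
Qed.

Lemma notin_D1_dominated v : v \notin D1 e nab ->
  exists2 A : {set T}, nbh e v \subset cnbhs e A & #|A| <= b /\ v \notin A.
Proof.
rewrite inE negb_forall => /existsP[A].
by rewrite negb_imply -leqNgt => /andP[/andP[vA vA_dom] leAb]; exists A.
Qed.

Lemma common_nbh_Rset_le v a :
  a != v -> #|nbh e a :&: nbh e v :&: R| <= b * t.
Proof.
move=> av; have sub_NR1 : nbh e a :&: nbh e v :&: R \subset
                          NR1 e nab v :&: NR1 e nab a.
  apply/subsetP => y /setIP[/setIP[ay vy] yR].
  by rewrite /NR1 !in_setI ay vy (subsetP Rset_sub_R1 y yR).
case: (boolP (a \in Bv e t nab v)) => [aBv | aBvN].
  suff -> : nbh e a :&: nbh e v :&: R = set0 by rewrite cards0.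
  have aD2 : a \in D2 e t nab.
    apply/bigcupP; exists v; last exact: setU1r.
    by rewrite inE; apply/set0Pn; exists a.
  by rewrite setIAC nbh_D1D2_Rset ?set0I // inE aD2 orbT.
rewrite inE av /= -ltnNge addn1 ltnS in aBvN.
exact: leq_trans (subset_leq_card sub_NR1) aBvN.
Qed.

Lemma nbh_Rset_cover v (A : {set T}) : nbh e v \subset cnbhs e A ->
  nbh e v :&: R \subset \bigcup_(a in A) (a |: (nbh e a :&: nbh e v :&: R)).
Proof.
move=> vA_dom; apply/subsetP => y /setIP[vy yR].
have := subsetP vA_dom y vy; rewrite inE => /existsP[a /andP[aA ya]].
apply/bigcupP; exists a => //; case/orP: ya => [/eqP-> | eay]; first exact: setU11.
by rewrite setU1r // !in_setI vy yR inE eay.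
Qed.

End ResidualNeighbourhood.

Theorem lemma35 (T : finType) (e : rel T) (t nab : nat) :
  symmetric e -> irreflexive e -> (3 <= t)%N -> ~ has_K3t e t ->
  nabla1B_lt e nab ->
  forall v : T,
    (#|nbh e v :&: Rset e t nab| <= bnd nab ^ 2 * t + bnd nab)%N.
Proof.
move=> _ _ _ _ _ v.
have [vD1 | /notin_D1_dominated[A vA_dom [leAb vA]]] := boolP (v \in D1 e nab).
  by rewrite nbh_D1D2_Rset ?cards0 // inE vD1.
have leFa a : a \in A ->
    #|a |: (nbh e a :&: nbh e v :&: Rset e t nab)| <= bnd nab * t + 1.
  move=> aA; rewrite cardsU1 addnC leq_add ?leq_b1 //.
  by apply: common_nbh_Rset_le; apply: contraNneq vA => <-.
rewrite (leq_trans (subset_leq_card (nbh_Rset_cover t nab vA_dom))) //.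
rewrite (leq_trans (card_bigcup_le _ _)) //.
apply: (@leq_trans (\sum_(a in A) (bnd nab * t + 1))); first exact: leq_sum.
by rewrite sum_nat_const (leq_trans (leq_mul leAb (leqnn _))) // mulnDr muln1 mulnA.
Qed.
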